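(* In the baseline diffusion model described in the context, once an individual consumes the new product he consumes it in every later period: for every $t\ge 1$, $D_n^{t-1}\subseteq D_n^{t}$. Equivalently, if $i\in D_n^{t}$ then $i\in D_n^{t'}$ for all $t'\ge t$.
   Context: Baseline diffusion model. There are $N\ge 2$ individuals $i\in\{1,\dots,N\}$ and two products, an incumbent $p_c$ and a new product $p_n$. The individuals are partitioned into $G\ge 2$ nonempty groups $N_1,\dots,N_G$ (the symbol $N_k$ also denotes the group's cardinality). Every member of group $N_k$ has the same aspiration level $H_{N_k}$, and $H_{N_1}>H_{N_2}>\cdots>H_{N_G}$; write $H_i$ for the aspiration level of individual $i$. Consuming $p_c$ gives every individual the payoff $v_L$, where $H_{N_2}<v_L<H_{N_1}$. Consuming $p_n$ gives individual $i$ the payoff $v_{Hi}$, where $v_{Hi}\ge H_{N_1}$ for all $i$. Product similarities are $s_{p_c,p_c}=s_{p_n,p_n}=1$, $s_{p_n,p_c}=s_p\in(0,1)$ and $s_{p_c,p_n}=0$. Individual similarities are $s_{i,i}=1$ and $s_{i,j}=s\in(0,1]$ for $i\neq j$. Dynamics. Time is $t=0,1,2,\dots$. In period $0$ everyone consumes $p_c$, i.e. $D_c^0=\{1,\dots,N\}$ and $D_n^0=\emptyset$. For $t\ge1$, individual $i$'s evaluations are $U_i^t(p_c)=\sum_{t'=0}^{t-1}\sum_{j\in D_c^{t'}} s_{i,j}(v_L-H_i)$ and $U_i^t(p_n)=s_p\,U_i^t(p_c)+\sum_{t'=0}^{t-1}\sum_{j\in D_n^{t'}} s_{i,j}(v_{Hj}-H_i)$.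 These are the sums $\sum s_{i,j}s_{p,p'}(v-H_i)$ over all past consumption cases $(j,p',v)$, one case per individual per past period. Individual $i$ consumes $p_n$ in period $t$ (i.e. $i\in D_n^t$) if $U_i^t(p_n)>U_i^t(p_c)$; otherwise he consumes $p_c$ (i.e. $i\in D_c^t$). Thus $D_c^t$ and $D_n^t$ partition $\{1,\dots,N\}$, and $|D|$ denotes the cardinality of a set $D$. *)

From HB Require Import structures.
From mathcomp Require Import all_boot all_order all_algebra.
Set Implicit Arguments. Unset Strict Implicit. Unset Printing Implicit Defensive.
Import Order.TTheory GRing.Theory Num.Theory.
Local Open Scope ring_scope.

(* Baseline diffusion model.  Individuals are 'I_N; groups are indexed
   0..G-1 (paper's N_1..N_G), grp i is the group of i, and H k is the
   aspiration level of group k, so H_i = H (grp i). *)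
Section Model.
Variables (R : realFieldType) (N : nat) (G : nat).
Variables (grp : 'I_N -> 'I_G) (H : nat -> R) (vL : R) (vH : 'I_N -> R)
          (sp s : R).

Definition Hi (i : 'I_N) : R := H (grp i).

Definition sim (i j : 'I_N) : R := if i == j then 1 else s.

(* A history is the list [D_n^0; ...; D_n^{t-1}] of past adopter sets;
   D_c^{t'} is the complement of D_n^{t'}. *)
Definition Uc (h : seq {set 'I_N}) (i : 'I_N) : R :=
  \sum_(D <- h) \sum_(j in ~: D) sim i j * (vL - Hi i).

Definition Un (h : seq {set 'I_N}) (i : 'I_N) : R :=
  sp * Uc h i + \sum_(D <- h) \sum_(j in D) sim i j * (vH j - Hi i).

Definition next_Dn (h : seq {set 'I_N}) : {set 'I_N} :=
  [set i | Uc h i < Un h i].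

(* hist t = [D_n^0; ...; D_n^t] *)
Fixpoint hist (t : nat) : seq {set 'I_N} :=
  match t with
  | 0 => [:: set0]
  | t'.+1 => rcons (hist t') (next_Dn (hist t'))
  end.

Definition Dn (t : nat) : {set 'I_N} := nth set0 (hist t) t.
Definition Dc (t : nat) : {set 'I_N} := ~: Dn t.

End Model.

From Pilot Require Import Defs.
From HB Require Import structures.
From mathcomp Require Import all_boot all_order all_algebra.
Set Implicit Arguments. Unset Strict Implicit. Unset Printing Implicit Defensive.
Import Order.TTheory GRing.Theory Num.Theory.
Local Open Scope ring_scope.

(* U_i^t(p_n) - U_i^t(p_c) is a sum of one gain g(D_n^k, i) per past period,
   and i adopts at t+1 iff this sum is positive.  If H_i >= v_L every gain is
   nonnegative, so the sum never decreases.  If H_i < v_L the gain g(D, i) is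
   nondecreasing in the adopter set D; by induction the adopter sets have
   grown so far, so the gains are nondecreasing in time, a positive sum
   forces a positive last gain, and the next gain is at least as large. *)

Lemma sum_le_mul_last (R : numDomainType) (f : nat -> R) (n : nat) :
  (forall k, (k < n)%N -> f k <= f k.+1) ->
  \sum_(k < n.+1) f k <= n.+1%:R * f n.
Proof.
elim: n => [|n IHn] f_nondecr; first by rewrite big_ord1 mul1r.
have le_sum : \sum_(k < n.+1) f k <= n.+1%:R * f n.+1.
  apply: le_trans (IHn _) _ => [k lt_kn|]; first exact/f_nondecr/ltnW.
  by rewrite ler_wpM2l ?ler0n ?f_nondecr.
by rewrite big_ord_recr /= -natr1 mulrDl mul1r lerD2r.
Qed.

Lemma sum_gt0_last_gt0 (R : numDomainType) (f : nat -> R) (n : nat) :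
  (forall k, (k < n)%N -> f k <= f k.+1) ->
  0 < \sum_(k < n.+1) f k -> 0 < f n.
Proof.
move=> f_nondecr sum_gt0.
by rewrite -(pmulr_rgt0 _ (ltr0Sn R n)) (lt_le_trans sum_gt0) ?sum_le_mul_last.
Qed.

Section Diffusion.
Variables (R : realFieldType) (N G : nat) (grp : 'I_N -> 'I_G)
  (H : nat -> R) (vL : R) (vH : 'I_N -> R) (sp s : R).

Local Notation Hi := (Hi grp H).
Local Notation sim := (@sim R N s).
Local Notation Uc := (Uc grp H vL s).
Local Notation Un := (Un grp H vL vH sp s).
Local Notation hist := (hist grp H vL vH sp s).
Local Notation Dn := (Dn grp H vL vH sp s).

Definition period_gain (D : {set 'I_N}) (i : 'I_N) : R :=
  \sum_j (if j \in D then sim i j * (vH j - Hi i)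
          else (sp - 1) * (sim i j * (vL - Hi i))).

Lemma Un_sub_Uc h i : Un h i - Uc h i = \sum_(D <- h) period_gain D i.
Proof.
rewrite /Un /Uc addrAC -{2}[\sum_(D <- h) _]mul1r -mulrBl mulr_sumr -big_split.
apply: eq_bigr => D _ /=; rewrite mulr_sumr /period_gain addrC.
rewrite [RHS](bigID (mem D)) /= [in RHS](eq_bigr _ (fun j jD => ifT _ _ jD)).
congr (_ + _); rewrite big_mkcond [RHS]big_mkcond; apply: eq_bigr => j _.
by rewrite in_setC; case: (j \in D).
Qed.

Lemma size_hist t : size (hist t) = t.+1.
Proof. by elim: t => //= t IHt; rewrite size_rcons IHt. Qed.

Lemma Dn_succ t : Dn t.+1 = next_Dn grp H vL vH sp s (hist t).
Proof. by rewrite /Dn /= nth_rcons size_hist ltnn eqxx. Qed.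

Lemma hist_mkseq t : hist t = mkseq Dn t.+1.
Proof. by elim: t => //= t IHt; rewrite mkseqS -IHt Dn_succ. Qed.

Lemma mem_Dn_succ t i :
  (i \in Dn t.+1) = (0 < \sum_(k < t.+1) period_gain (Dn k) i).
Proof.
rewrite Dn_succ inE -subr_gt0 Un_sub_Uc hist_mkseq /mkseq.
by rewrite -/(index_iota 0 t.+1) big_map big_mkord.
Qed.

Hypothesis sp_le1 : sp <= 1.
Hypothesis s_ge0 : 0 <= s.
Hypothesis Hi_le_vH : forall i j, Hi i <= vH j.

Lemma sim_ge0 i j : 0 <= sim i j.
Proof. by rewrite /Defs.sim; case: (i == j). Qed.

Lemma period_gain_ge0 D i : vL <= Hi i -> 0 <= period_gain D i.
Proof.
move=> vL_le_Hi; apply: sumr_ge0 => j _.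
have := sim_ge0 i j; have := Hi_le_vH i j.
by case: (j \in D) => ? ?; [apply: mulr_ge0 | apply: mulr_le0; last apply: mulr_ge0_le0];
  rewrite ?subr_ge0 ?subr_le0.
Qed.

Lemma period_gain_subset (D D' : {set 'I_N}) i :
  Hi i < vL -> D \subset D' -> period_gain D i <= period_gain D' i.
Proof.
move=> Hi_lt_vL /subsetP sub_DD'; apply: ler_sum => j _.
have := sim_ge0 i j; have := Hi_le_vH i j.
case jD: (j \in D); first by rewrite sub_DD'.
case: (j \in D') => // ? ?.
apply: (@le_trans _ _ 0); last by apply: mulr_ge0; rewrite ?subr_ge0.
apply: mulr_le0_ge0; first by rewrite subr_le0.
by apply: mulr_ge0; rewrite // subr_ge0; exact: ltW.
Qed.

Lemma Dn_subset_succ t : Dn t \subset Dn t.+1.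
Proof.
elim/ltn_ind: t => -[_ | t IHt]; first by rewrite /Dn /= sub0set.
apply/subsetP => i; rewrite !mem_Dn_succ => sum_gt0; rewrite big_ord_recr /=.
have [Hi_lt_vL | vL_le_Hi] := ltP (Hi i) vL; last first.
  exact: ltr_wpDr (period_gain_ge0 _ vL_le_Hi) sum_gt0.
have gain_nondecr k : (k < t)%N -> period_gain (Dn k) i <= period_gain (Dn k.+1) i.
  by move=> lt_kt; apply/period_gain_subset/IHt/ltnW.
have gain_t_gt0 := sum_gt0_last_gt0 gain_nondecr sum_gt0.
have gain_le := period_gain_subset Hi_lt_vL (IHt t (ltnSn t)).
exact: addr_gt0 sum_gt0 (lt_le_trans gain_t_gt0 gain_le).
Qed.

Lemma Dn_subset t t' : (t <= t')%N -> Dn t \subset Dn t'.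
Proof.
move/subnK <-; elim: (t' - t)%N => // d IHd.
exact: subset_trans IHd (Dn_subset_succ _).
Qed.

End Diffusion.

Lemma Hi_le_H0 (R : realFieldType) (N G : nat) (grp : 'I_N -> 'I_G)
  (H : nat -> R) :
  (forall k l : nat, (k < l < G)%N -> H l < H k) ->
  forall i, Hi grp H i <= H 0%N.
Proof.
move=> H_decr i; rewrite /Hi.
case E: (nat_of_ord (grp i)) => [//|k].
by apply/ltW/H_decr; rewrite -E ltn_ord andbT E.
Qed.

Theorem lemma1 (R : realFieldType) (N G : nat) (grp : 'I_N -> 'I_G)
  (H : nat -> R) (vL : R) (vH : 'I_N -> R) (sp s : R) :
  (2 <= N)%N -> (2 <= G)%N ->
  (forall k : 'I_G, exists i : 'I_N, grp i = k) ->
  (forall k l : nat, (k < l < G)%N -> H l < H k) ->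
  H 1%N < vL -> vL < H 0%N ->
  (forall i : 'I_N, H 0%N <= vH i) ->
  0 < sp -> sp < 1 ->
  0 < s -> s <= 1 ->
  (forall t : nat, (1 <= t)%N ->
     Dn grp H vL vH sp s t.-1 \subset Dn grp H vL vH sp s t) /\
  (forall (i : 'I_N) (t t' : nat), (t <= t')%N ->
     i \in Dn grp H vL vH sp s t -> i \in Dn grp H vL vH sp s t').
Proof.
move=> _ _ _ H_decr _ _ H0_le_vH _ sp_lt1 s_gt0 _.
have Hi_le_vH i j : Hi grp H i <= vH j.
  exact: le_trans (Hi_le_H0 grp H_decr i) (H0_le_vH j).
have Dn_sub := Dn_subset vL (ltW sp_lt1) (ltW s_gt0) Hi_le_vH.
split=> [[|t] _ | i t t' le_tt']; first by [].
  exact: Dn_sub.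
exact/subsetP/Dn_sub.
Qed.
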